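(* Let $(G,\cdot,N,\star,\odot)$ be a left bracoid, i.e. a left skew bracoid in which $(N,\star)$ is abelian. Then for every $g\in G$ the map $\alpha(g):N\to N$, ${}^{\alpha(g)}\eta=\overline{(g\odot e_N)}\star(g\odot\eta)\star\overline{\eta}$, is an endomorphism of the group $(N,\star)$.
   Context: For a group $(N,\star)$, $e_N$ denotes its identity and $\overline{\eta}$ the inverse of $\eta$. A left skew bracoid is a 5-tuple $(G,\cdot,N,\star,\odot)$ where $(G,\cdot)$ and $(N,\star)$ are groups and $\odot$ is a transitive (left) action of $(G,\cdot)$ on the set $N$ such that $g\odot(\mu\star\eta)=(g\odot\mu)\star\overline{(g\odot e_N)}\star(g\odot\eta)$ for all $g\in G$, $\mu,\eta\in N$. *)

Record is_group (T : Type) (mul : T -> T -> T) (e : T) (inv : T -> T) : Prop := {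
  grp_assoc : forall x y z, mul x (mul y z) = mul (mul x y) z;
  grp_idl : forall x, mul e x = x;
  grp_idr : forall x, mul x e = x;
  grp_invl : forall x, mul (inv x) x = e;
  grp_invr : forall x, mul x (inv x) = e
}.

Definition is_abelian (T : Type) (mul : T -> T -> T) : Prop :=
  forall x y, mul x y = mul y x.

Definition is_left_action (G N : Type) (mulG : G -> G -> G) (eG : G)
  (act : G -> N -> N) : Prop :=
  (forall x, act eG x = x) /\
  (forall g h x, act (mulG g h) x = act g (act h x)).

Definition is_transitive (G N : Type) (act : G -> N -> N) : Prop :=
  forall x y : N, exists g : G, act g x = y.

Definition is_left_skew_bracoid (G N : Type)
  (mulG : G -> G -> G) (eG : G) (invG : G -> G)
  (mulN : N -> N -> N) (eN : N) (invN : N -> N)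
  (act : G -> N -> N) : Prop :=
  is_group G mulG eG invG /\
  is_group N mulN eN invN /\
  is_left_action G N mulG eG act /\
  is_transitive G N act /\
  (forall g mu eta,
     act g (mulN mu eta) = mulN (mulN (act g mu) (invN (act g eN))) (act g eta)).

Definition is_left_bracoid (G N : Type)
  (mulG : G -> G -> G) (eG : G) (invG : G -> G)
  (mulN : N -> N -> N) (eN : N) (invN : N -> N)
  (act : G -> N -> N) : Prop :=
  is_left_skew_bracoid G N mulG eG invG mulN eN invN act /\ is_abelian N mulN.

Definition is_group_endo (N : Type) (mulN : N -> N -> N) (f : N -> N) : Prop :=
  forall x y, f (mulN x y) = mulN (f x) (f y).

Definition alpha (G N : Type) (mulN : N -> N -> N) (eN : N) (invN : N -> N)
  (act : G -> N -> N) (g : G) (eta : N) : N :=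
  mulN (mulN (invN (act g eN)) (act g eta)) (invN eta).

(** In an abelian group the bracoid compatibility condition says exactly that
    [eta |-> (g . e_N)^-1 * (g . eta)] is an endomorphism, and [eta |-> eta^-1]
    is one too; [alpha g] is their pointwise product, and pointwise products of
    endomorphisms of an abelian group are endomorphisms. *)


Section Group.

Variables (N : Type) (mulN : N -> N -> N) (eN : N) (invN : N -> N).
Hypothesis groupN : is_group N mulN eN invN.

Let mulA := grp_assoc _ _ _ _ groupN.
Let mul1N := grp_idl _ _ _ _ groupN.
Let mulN1 := grp_idr _ _ _ _ groupN.
Let mulVN := grp_invl _ _ _ _ groupN.
Let mulNV := grp_invr _ _ _ _ groupN.

Lemma inv_uniq (x y : N) : mulN x y = eN -> y = invN x.
Proof.
  intros Hxy.
  rewrite <- (mul1N y), <- (mulVN x), <- mulA, Hxy, mulN1.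
  reflexivity.
Qed.

(* The compatibility condition of a skew bracoid, with [f := act g]. *)
Lemma translate_skew_affine_endo (f : N -> N) :
  (forall x y, f (mulN x y) = mulN (mulN (f x) (invN (f eN))) (f y)) ->
  is_group_endo N mulN (fun x => mulN (invN (f eN)) (f x)).
Proof.
  intros Hf x y.
  rewrite Hf, !mulA.
  reflexivity.
Qed.

Hypothesis abelianN : is_abelian N mulN.

Lemma inv_endo_abelian : is_group_endo N mulN invN.
Proof.
  intros x y.
  symmetry; apply inv_uniq.
  rewrite (abelianN (invN x) (invN y)), mulA, <- (mulA x y), mulNV, mulN1, mulNV.
  reflexivity.
Qed.

Lemma mul_endo_abelian (f h : N -> N) :
  is_group_endo N mulN f -> is_group_endo N mulN h ->
  is_group_endo N mulN (fun x => mulN (f x) (h x)).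
Proof.
  intros Hf Hh x y.
  rewrite Hf, Hh, !mulA.
  f_equal.
  rewrite <- !mulA.
  f_equal.
  apply abelianN.
Qed.

End Group.

Theorem corollary2p5 (G N : Type)
  (mulG : G -> G -> G) (eG : G) (invG : G -> G)
  (mulN : N -> N -> N) (eN : N) (invN : N -> N)
  (act : G -> N -> N) :
  is_left_bracoid G N mulG eG invG mulN eN invN act ->
  forall g : G, is_group_endo N mulN (alpha G N mulN eN invN act g).
Proof.
  intros [[_ [groupN [_ [_ compat]]]] abelianN] g.
  apply (mul_endo_abelian N mulN eN invN groupN abelianN).
  - exact (translate_skew_affine_endo N mulN eN invN groupN (act g) (compat g)).
  - exact (inv_endo_abelian N mulN eN invN groupN abelianN).
Qed.
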